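(* If $|V|=6$, the complete graph $K_6$ on $V$ is B-factorizable. Equivalently, for every HAP table for $K_6$ (on 5 days), if $P(K_6,HA)$ is non-empty then it contains an integral point.
   Context: Let $V$ be a finite set with $|V|$ even. $K=\binom{V}{2}$ is the set of 2-element subsets of $V$. An equal partition of $V$ is an unordered pair $\{H,A\}$ of disjoint subsets with $H\cup A=V$ and $|H|=|A|=|V|/2$; $C=C(V)$ is the set of equal partitions. For $c=\{H,A\}\in C$, $B_c$ is the complete bipartite graph with parts $H$ and $A$. Vectors live in $\mathbb N^{K\cup C}$ with $\mathbb N=\{0,1,2,\dots\}$; $v|_K$ denotes the restriction to coordinates in $K$. For $E\subseteq K$, $\chi_E\in\{0,1\}^K$ is its indicator vector. For $E\subseteq K$ and $c\in C$, $\chi_{E,c}\in\mathbb N^{K\cup C}$ has $K$-components $\chi_E$ and $C$-components equal to the indicator of $c$. $PM(V)=\{\chi_{q,c}: c\in C,\ q\text{ a perfect matching of }B_c\}$. For $\mathcal M\subseteq\mathbb N^{K\cup C}$, $\mathbf N(\mathcal M)$ is the set of finite nonnegative integer combinations of elements of $\mathcal M$, and $\overline{\mathbf N}(\mathcal M)=\{v\in\mathbb N^{K\cup C}: kv\in\mathbf N(\mathcal M)\text{ for some integer }k\ge1\}$. A regular graph $G=(V,E)$ is B-factorizable if every $v\in\overline{\mathbf N}(PM(V))$ with $v|_K=\chi_E$ belongs to $\mathbf N(PM(V))$. For an $r$-regular graph $G=(V,E)$, a HAP table is a map assigning to each $d\in\{1,\dots,r\}$ an equal partition $\{H(d),A(d)\}\in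 C$. $P(G,HA)$ is the set of real vectors $(x_{e,d})_{e\in K,\,d\in\{1,\dots,r\}}$ satisfying: (1) $\sum_{d=1}^r x_{e,d}=1$ for every $e\in E$, and $x_{e,d}=0$ for every $e\in K\setminus E$ and every $d$; (2) for every $d$ and every $a\in V$, $\sum_{b\in V\setminus\{a\}}x_{\{a,b\},d}=1$; (3) $0\le x_{e,d}\le1$ for all $e\in E$ and all $d$; (4) $x_{\{a,b\},d}=0$ whenever $\{a,b\}\in E$ and $a,b$ are both in $H(d)$ or both in $A(d)$. *)

From HB Require Import structures.
From mathcomp Require Import all_boot.
Set Implicit Arguments. Unset Strict Implicit. Unset Printing Implicit Defensive.

Section Defs.
Variable V : finType.

Definition edge := {e : {set V} | #|e| == 2}.

(* C = equal partitions {H, A}: an unordered pair {H, V\H} with |H| = |V|/2 *)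
Definition is_eqpart (c : {set {set V}}) : bool :=
  [exists H : {set V}, (c == [set H; ~: H]) && (#|H|.*2 == #|V|)].
Definition eqpart := {c : {set {set V}} | is_eqpart c}.

(* vectors in N^(K ∪ C) (disjoint union of coordinate sets) *)
Definition vec := edge + eqpart -> nat.

Definition bip_edge (c : eqpart) (e : edge) : bool :=
  [exists H in val c, exists A in val c,
     (H != A) && [exists a in H, exists b in A, val e == [set a; b]]].

Definition is_pm (c : eqpart) (q : {set edge}) : bool :=
  [forall e in q, bip_edge c e] &&
  [forall x : V, #|[set e in q | x \in val e]| == 1].

Definition chi_qc (c : eqpart) (q : {set edge}) : vec :=
  fun i => match i with
           | inl e => nat_of_bool (e \in q)
           | inr c' => nat_of_bool (c' == c)
           end.

Definition in_N_PM (v : vec) : Prop :=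
  exists lam : eqpart * {set edge} -> nat,
    (forall p, ~~ is_pm p.1 p.2 -> lam p = 0) /\
    forall i, v i = \sum_(p : eqpart * {set edge}) lam p * chi_qc p.1 p.2 i.

Definition in_Nbar_PM (v : vec) : Prop :=
  exists k : nat, 1 <= k /\ in_N_PM (fun i => k * v i).

Definition B_factorizable (E : {set edge}) : Prop :=
  forall v : vec, (forall e : edge, v (inl e) = nat_of_bool (e \in E)) ->
    in_Nbar_PM v -> in_N_PM v.

End Defs.

From HB Require Import structures.
From mathcomp Require Import all_boot zify.
Set Implicit Arguments. Unset Strict Implicit. Unset Printing Implicit Defensive.

(* Let v be 1 on every edge with k v = sum_p lam_p chi_p, a rational
   combination of pairs p = (c, q), q a perfect matching of the bipartite
   graph B_c.  Write v_c for the coefficients of v on the ten equal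
   partitions c of the six vertices.  Double counting gives:
   - sum_p lam_p = 5k (every vertex lies on five edges, once in each q),
     hence sum_c v_c = 5;
   - v_c <= 2: the six edges inside the sides of c are covered k times each,
     only by matchings of other partitions (total weight 5k - k v_c), and a
     perfect matching has at most one edge inside each side of size 3;
   - every edge crosses some c with v_c > 0.
   Conversely, for every vector with these properties a finite search finds a
   1-factorization of K_6 whose five matchings can be assigned compatible
   partitions with the prescribed multiplicities; this yields an integral
   decomposition of v. *)

Lemma sum_mem (T : finType) (A B : {set T}) : \sum_(x in A) (x \in B : nat) = #|A :&: B|.
Proof.
rewrite -sum1_card big_mkcond [RHS]big_mkcond /=; apply: eq_bigr => x _.
by rewrite inE; case: (x \in A); case: (x \in B).
Qed.

Lemma sum_count_mem (T : finType) (s : seq T) (F : T -> nat) :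
  \sum_p count_mem p s * F p = \sum_(d <- s) F d.
Proof.
elim: s => [|d s IH]; first by rewrite big_nil big1 // => p _.
rewrite big_cons -IH /=; under eq_bigr => p _ do rewrite mulnDl.
rewrite big_split /= (bigD1 d) //= eqxx mul1n big1 ?addn0 // => p /negbTE.
by rewrite eq_sym => ->.
Qed.

Lemma sum_nat_of_bool (T : Type) (s : seq T) (P : pred T) :
  \sum_(x <- s) (P x : nat) = count P s.
Proof. by rewrite -sum1_count [RHS]big_mkcond. Qed.

Lemma count_zip1 (S T : Type) (P : pred S) (s : seq S) (t : seq T) :
  size s = size t -> count (fun x => P x.1) (zip s t) = count P s.
Proof. by move=> st; rewrite -{2}(unzip1_zip (eq_leq st)) count_map. Qed.

Lemma count_zip2 (S T : Type) (P : pred T) (s : seq S) (t : seq T) :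
  size s = size t -> count (fun x => P x.2) (zip s t) = count P t.
Proof. by move=> st; rewrite -{2}(unzip2_zip (eq_leq (esym st))) count_map. Qed.

Section Matchings.
Variable V : finType.
Implicit Types (c : eqpart V) (e : edge V) (q : {set edge V}) (H S : {set V}).

Lemma bip_edgeE c H e : val c = [set H; ~: H] ->
  bip_edge c e = ~~ (val e \subset H) && ~~ (val e \subset ~: H).
Proof.
move=> cE; rewrite /bip_edge cE; apply/idP/idP.
  case/existsP => H1 /andP [H1c /existsP [A1 /andP [A1c /andP [H1A1]]]].
  case/existsP => a /andP [aH1 /existsP [b /andP [bA1 /eqP eE]]].
  have [x [y [xe ye xH yH]]] :
      exists x y, [/\ x \in val e, y \in val e, x \in H & y \notin H].
    have [ae be] : a \in val e /\ b \in val e by rewrite eE set21 set22.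
    move: H1c A1c H1A1 aH1 bA1; rewrite !in_set2.
    case/orP => /eqP E1 /orP [] /eqP E2; rewrite E1 E2 ?eqxx // in_setC => _ aH bH.
      by exists a, b.
    by exists b, a.
  by apply/andP; split; apply/subsetPn; [exists y | exists x]; rewrite ?in_setC ?negbK.
case/andP => /subsetPn [y ye yH] /subsetPn [x xe]; rewrite in_setC negbK => xH.
have xy : x != y by apply: contraNneq yH => <-.
have eE : val e = [set x; y].
  apply/esym/eqP; rewrite eqEcard subUset !sub1set xe ye cards2 xy.
  by rewrite (eqP (valP e)).
have HC : H != ~: H by apply/eqP => /setP /(_ x); rewrite in_setC xH.
apply/existsP; exists H; rewrite set21 /=; apply/existsP; exists (~: H).
rewrite set22 HC /=; apply/existsP; exists x; rewrite xH /=.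
by apply/existsP; exists y; rewrite in_setC yH eE /=.
Qed.

(* Double counting: the edges of a perfect matching q lying inside S are
   disjoint pairs of vertices of S. *)
Lemma matching_inside q S : (forall x, #|[set e in q | x \in val e]| = 1) ->
  #|[set e in q | val e \subset S]|.*2 <= #|S|.
Proof.
move=> deg; set X := [set e in q | val e \subset S].
have -> : #|X|.*2 = \sum_(e in X) \sum_(x in S) (x \in val e : nat).
  rewrite -muln2 -sum_nat_const; apply: eq_bigr => e; rewrite inE => /andP [_ eS].
  by rewrite sum_mem (setIidPr eS) (eqP (valP e)).
rewrite exchange_big -sum1_card; apply: leq_sum => x _.
rewrite -[leqRHS](deg x) -sum1_card big_mkcond [leqRHS]big_mkcond /=.
apply: leq_sum => e _; rewrite !inE.
by case: (e \in q); case: (x \in sval e); case: (_ \subset _).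
Qed.

Lemma matching_noncrossing c H q : val c = [set H; ~: H] ->
  #|H| = 3 -> #|~: H| = 3 -> (forall x, #|[set e in q | x \in val e]| = 1) ->
  #|[set e in q | ~~ bip_edge c e]| <= 2.
Proof.
move=> cE cH cHC deg.
have inside S : #|S| = 3 -> #|[set e in q | val e \subset S]| <= 1.
  by move=> cS; have := matching_inside S deg; rewrite cS; lia.
apply: leq_trans (leq_add (inside _ cH) (inside _ cHC)).
apply: leq_trans (leq_card_setU _ _); apply: subset_leq_card; apply/subsetP => e.
by rewrite !inE (bip_edgeE _ cE) negb_and !negbK; case: (e \in q).
Qed.

End Matchings.

Section RationalDecomposition.
Variables (V : finType) (v : vec V) (k : nat) (lam : eqpart V * {set edge V} -> nat).
Hypotheses (k_gt0 : 0 < k) (lam_pm : forall p, ~~ is_pm p.1 p.2 -> lam p = 0)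
  (k_v : forall i, k * v i = \sum_p lam p * chi_qc p.1 p.2 i)
  (v_edge : forall e, v (inl e) = 1).

Lemma lam_support p : lam p != 0 -> is_pm p.1 p.2.
Proof. by apply: contraR => /lam_pm ->. Qed.

Lemma edge_mult e : \sum_p lam p * (e \in p.2) = k.
Proof. by have := k_v (inl e); rewrite v_edge muln1 => ->. Qed.

Lemma part_mult c : k * v (inr c) = \sum_p lam p * (c == p.1).
Proof. exact: k_v. Qed.

Lemma double_count (A : pred (edge V)) :
  #|[set e | A e]| * k = \sum_p lam p * #|[set e in p.2 | A e]|.
Proof.
rewrite -sum_nat_const (eq_bigr _ (fun e _ => esym (edge_mult e))).
rewrite exchange_big; apply: eq_bigr => p _.
by rewrite -big_distrr /= sum_mem setIdE setIC.
Qed.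

(* Every vertex has degree 1 in each matching, so the total weight is
   k times the degree of any vertex. *)
Lemma lam_total (z : V) : #|[set e : edge V | z \in val e]| * k = \sum_p lam p.
Proof.
rewrite double_count; apply: eq_bigr => p _.
have [->|/lam_support/andP [_ /forallP deg]] := eqVneq (lam p) 0; first by [].
by rewrite (eqP (deg z)) muln1.
Qed.

(* Each matching belongs to exactly one partition. *)
Lemma parts_total : \sum_c k * v (inr c) = \sum_p lam p.
Proof.
rewrite (eq_bigr _ (fun c _ => part_mult c)) exchange_big; apply: eq_bigr => p _.
rewrite -big_distrr /= (bigD1 p.1) //= eqxx big1 ?addn0 ?muln1 // => c.
by move/negbTE ->.
Qed.

Lemma part_complement c : k * v (inr c) + \sum_p lam p * (c != p.1) = \sum_p lam p.
Proof.
rewrite part_mult -big_split; apply: eq_bigr => p _ /=.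
by rewrite -mulnDr; case: (c == p.1); rewrite muln1.
Qed.

(* The edges inside the sides of c are covered only by matchings of other
   partitions, at most twice each. *)
Lemma noncrossing_bound c H : val c = [set H; ~: H] -> #|H| = 3 -> #|~: H| = 3 ->
  #|[set e | ~~ bip_edge c e]| * k <= 2 * \sum_p lam p * (c != p.1).
Proof.
move=> cE cH cHC; rewrite double_count big_distrr /=; apply: leq_sum => p _.
have [->|/lam_support/andP [/forallP bip /forallP deg]] := eqVneq (lam p) 0.
  by rewrite !mul0n muln0.
have [cp|_] := eqVneq c p.1; last first.
  rewrite muln1 mulnC leq_mul // (matching_noncrossing cE) // => x.
  exact/eqP/deg.
rewrite /= !muln0 leqn0 muln_eq0 cards_eq0; apply/orP; right.
apply/eqP/setP => e; rewrite !inE; apply/negbTE.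
by rewrite negb_and negbK -implybE cp; apply: bip.
Qed.

Lemma covered e : exists2 c, 0 < v (inr c) & bip_edge c e.
Proof.
have [p /andP [lam_p e_p]] : exists p, (lam p != 0) && (e \in p.2).
  apply/existsP; apply: contraTT k_gt0 => /existsPn none; rewrite -leqNgt.
  rewrite -(edge_mult e) leqn0 sum_nat_eq0; apply/forall_inP => p _.
  move: (none p); rewrite negb_and negbK.
  by case/orP => [/eqP -> | /negbTE ->]; rewrite ?muln0.
have /andP [/forallP bip _] := lam_support lam_p.
exists p.1; last exact: (implyP (bip e)).
have : 0 < k * v (inr p.1).
  rewrite part_mult (bigD1 p) //= eqxx muln1.
  by apply: leq_trans (leq_addr _ _); rewrite lt0n.
by rewrite muln_gt0 => /andP [].
Qed.

End RationalDecomposition.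

(* An explicit model of K_6 on the vertices 0, ..., 5.  The ten equal
   partitions {H, ~H} are given by their sides H containing the vertex 0. *)
Definition triples : seq (seq nat) :=
  [:: [:: 0; 1; 2]; [:: 0; 1; 3]; [:: 0; 1; 4]; [:: 0; 1; 5]; [:: 0; 2; 3];
      [:: 0; 2; 4]; [:: 0; 2; 5]; [:: 0; 3; 4]; [:: 0; 3; 5]; [:: 0; 4; 5]].

Definition edges6 : seq (nat * nat) :=
  [:: (0, 1); (0, 2); (0, 3); (0, 4); (0, 5); (1, 2); (1, 3); (1, 4); (1, 5);
      (2, 3); (2, 4); (2, 5); (3, 4); (3, 5); (4, 5)].

Definition matchings6 : seq (seq (nat * nat)) :=
  [:: [:: (0, 1); (2, 3); (4, 5)]; [:: (0, 1); (2, 4); (3, 5)];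
      [:: (0, 1); (2, 5); (3, 4)]; [:: (0, 2); (1, 3); (4, 5)];
      [:: (0, 2); (1, 4); (3, 5)]; [:: (0, 2); (1, 5); (3, 4)];
      [:: (0, 3); (1, 2); (4, 5)]; [:: (0, 3); (1, 4); (2, 5)];
      [:: (0, 3); (1, 5); (2, 4)]; [:: (0, 4); (1, 2); (3, 5)];
      [:: (0, 4); (1, 3); (2, 5)]; [:: (0, 4); (1, 5); (2, 3)];
      [:: (0, 5); (1, 2); (3, 4)]; [:: (0, 5); (1, 3); (2, 4)];
      [:: (0, 5); (1, 4); (2, 3)]].

(* Six 1-factorizations of K_6, as sets of five indices into matchings6. *)
Definition factorizations6 : seq (seq nat) :=
  [:: [:: 0; 4; 8; 10; 12]; [:: 0; 5; 7; 9; 13]; [:: 1; 3; 7; 11; 12];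
      [:: 1; 5; 6; 10; 14]; [:: 2; 3; 8; 9; 14]; [:: 2; 4; 6; 11; 13]].

Definition side (i a : nat) : bool := a \in nth [::] triples i.
Definition crosses (i : nat) (ab : nat * nat) : bool := side i ab.1 != side i ab.2.
Definition touches (y : nat) (ab : nat * nat) : bool := (ab.1 == y) || (ab.2 == y).
Definition matching (m : nat) : seq (nat * nat) := nth [::] matchings6 m.
Definition factorization (f : nat) : seq nat := nth [::] factorizations6 f.

Definition compatible (i m : nat) : bool := all (crosses i) (matching m).

Fixpoint bool_lists n : seq (seq bool) :=
  if n is n'.+1 then [seq x :: t | x <- [:: false; true], t <- bool_lists n']
  else [:: [::]].

Lemma mem_bool_lists (l : seq bool) : l \in bool_lists (size l).
Proof.
elim: l => [|x l IH] //.
change (x :: l \in [seq y :: t | y <- [:: false; true], t <- bool_lists (size l)]).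
by apply/allpairsP; exists (x, l); split; [case: x | exact: IH | ].
Qed.

Lemma all_iota (P : pred nat) n i : all P (iota 0 n) -> i < n -> P i.
Proof. by move=> /allP P_n i_n; apply: P_n; rewrite mem_iota. Qed.

Lemma triples_contain0 : all (fun i => side i 0) (iota 0 10).
Proof. by vm_compute. Qed.

Lemma triples_inj : all (fun i => all (fun j =>
  all (fun y => side i y == side j y) (iota 0 6) ==> (i == j)) (iota 0 10)) (iota 0 10).
Proof. by vm_compute. Qed.

Lemma triples_card : all (fun i => count (side i) (iota 0 6) == 3) (iota 0 10).
Proof. by vm_compute. Qed.

Lemma triples_complete : all (fun s => (count id s == 3) && head false s ==>
  has (fun i => s == [seq side i y | y <- iota 0 6]) (iota 0 10)) (bool_lists 6).
Proof. by vm_compute. Qed.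

Lemma edges_sorted : all (fun ab => (ab.1 < ab.2) && (ab.2 < 6)) edges6.
Proof. by vm_compute. Qed.

Lemma edge_vertices ab : ab \in edges6 -> [/\ ab.1 < ab.2, ab.1 < 6 & ab.2 < 6].
Proof.
by move=> /(allP edges_sorted) /andP [lt_ab b6]; split=> //; apply: ltn_trans lt_ab b6.
Qed.

Lemma edges_uniq : uniq edges6.
Proof. by vm_compute. Qed.

Lemma edges_complete :
  all (fun a => all (fun b => (a < b) ==> ((a, b) \in edges6)) (iota 0 6)) (iota 0 6).
Proof. by vm_compute. Qed.

Lemma edges_inj : all (fun ab => all (fun ab' =>
  all (fun y => touches y ab == touches y ab') (iota 0 6) ==> (ab == ab')) edges6) edges6.
Proof. by vm_compute. Qed.

Lemma matchings_edges :
  all (fun m => all (fun ab => ab \in edges6) (matching m)) (iota 0 15).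
Proof. by vm_compute. Qed.

Lemma matchings_perfect : all (fun m => all (fun y =>
    count (fun ab => (ab \in matching m) && touches y ab) edges6 == 1) (iota 0 6))
  (iota 0 15).
Proof. by vm_compute. Qed.

Lemma factorizations_ok : all (fun f =>
  [&& size (factorization f) == 5, all (fun m => m < 15) (factorization f) &
   all (fun ab => count (fun m => ab \in matching m) (factorization f) == 1) edges6])
  (iota 0 6).
Proof. by vm_compute. Qed.

Lemma degree0 : count (touches 0) edges6 = 5.
Proof. by vm_compute. Qed.

Lemma noncrossing6 : all (fun i => count (predC (crosses i)) edges6 == 6) (iota 0 10).
Proof. by vm_compute. Qed.

Definition covering (l : seq nat) : bool :=
  all (fun ab => has (fun i => (0 < nth 0 l i) && crosses i ab) (iota 0 10)) edges6.

(* The coefficient vectors l (indexed by the ten partitions) that can arise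
   from a rational decomposition: entries at most 2 summing to 5, covering. *)
Definition admissible (l : seq nat) : bool :=
  [&& size l == 10, all (fun x => x <= 2) l, sumn l == 5 & covering l].

Fixpoint bounded_lists n s : seq (seq nat) :=
  if n is n'.+1 then
    [seq x :: t | x <- iota 0 (minn 2 s).+1, t <- bounded_lists n' (s - x)]
  else if s is 0 then [:: [::]] else [::].

Lemma mem_bounded_lists l :
  all (fun x => x <= 2) l -> l \in bounded_lists (size l) (sumn l).
Proof.
elim: l => [|x l IH] //= /andP [x2 l2].
change (x :: l \in [seq y :: t | y <- iota 0 (minn 2 (x + sumn l)).+1,
                                 t <- bounded_lists (size l) (x + sumn l - y)]).
apply/allpairsPdep; exists x, l.
by rewrite mem_iota add0n ltnS leq_min x2 leq_addr addKn IH.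
Qed.

(* A certificate for l: a factorization f together with, for each of its five
   matchings, a compatible partition, partition i being used exactly l_i times. *)
Definition certificate_ok (l : seq nat) (w : nat * seq nat) : bool :=
  let: (f, a) := w in
  [&& f < 6, size a == 5, all (fun i => i < 10) a,
      all (fun i => count_mem i a == nth 0 l i) (iota 0 10) &
      all2 compatible a (factorization f)].

Fixpoint assign (ms cnt : seq nat) : option (seq nat) :=
  if ms is m :: ms' then
    foldr (fun i other =>
      if (0 < nth 0 cnt i) && compatible i m then
        if assign ms' (set_nth 0 cnt i (nth 0 cnt i).-1) is Some a
        then Some (i :: a) else other
      else other) None (iota 0 10)
  else Some [::].

Definition find_certificate (l : seq nat) : option (nat * seq nat) :=
  foldr (fun f other =>
    if assign (factorization f) l is Some a then Some (f, a) else other)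
    None (iota 0 6).

Lemma certificates_found : all (fun l => covering l ==>
  if find_certificate l is Some w then certificate_ok l w else false)
  (bounded_lists 10 5).
Proof. by vm_compute. Qed.

Lemma admissible_certified l : admissible l -> exists w, certificate_ok l w.
Proof.
case/and4P => /eqP size_l l2 /eqP sum_l cov.
have := allP certificates_found l; rewrite -{1}size_l -{1}sum_l mem_bounded_lists //.
rewrite cov => /(_ isT); case: find_certificate => // w ok; by exists w.
Qed.

Section Transport.
Variables (V : finType) (g : 'I_6 -> V) (h : V -> 'I_6).
Hypotheses (gK : cancel g h) (hK : cancel h g).

Definition vtx (y : nat) : V := g (inord y).
Definition idx (z : V) : nat := h z.

Lemma idx_lt z : idx z < 6. Proof. exact: ltn_ord. Qed.

Lemma idx_vtx y : y < 6 -> idx (vtx y) = y.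
Proof. by move=> y6; rewrite /idx /vtx gK inordK. Qed.

Lemma vtx_idx z : vtx (idx z) = z.
Proof. by rewrite /vtx /idx inord_val hK. Qed.

Lemma eq_vtx z y : y < 6 -> (z == vtx y) = (idx z == y).
Proof. by move=> y6; apply/eqP/eqP => [->|<-]; [apply: idx_vtx | rewrite vtx_idx]. Qed.

Lemma card_idx (Q : pred nat) : #|[set z | Q (idx z)]| = count Q (iota 0 6).
Proof.
have -> : [set z | Q (idx z)] = g @: [set y : 'I_6 | Q y].
  apply/setP => z; rewrite inE; apply/idP/imsetP => [Qz|[y]].
    by exists (h z); rewrite ?inE // hK.
  by rewrite inE => Qy ->; rewrite /idx gK.
rewrite card_imset; last exact: can_inj gK.
by rewrite -sum1dep_card -(big_mkord Q (fun _ => 1)) sum1_count.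
Qed.

Lemma card_V : #|V| = 6.
Proof.
rewrite -[RHS](size_iota 0) -count_predT -card_idx.
by apply: eq_card => z; rewrite inE.
Qed.

Definition side_set (i : nat) : {set V} := [set z | side i (idx z)].

Lemma mem_side i y : y < 6 -> (vtx y \in side_set i) = side i y.
Proof. by move=> y6; rewrite inE idx_vtx. Qed.

Lemma card_side i : i < 10 -> #|side_set i| = 3.
Proof. by move=> i10; rewrite card_idx (eqP (all_iota triples_card i10)). Qed.

Lemma card_side_compl i : i < 10 -> #|~: side_set i| = 3.
Proof. by move=> i10; rewrite cardsCs setCK card_V card_side. Qed.

Lemma side_eqpart i : i < 10 -> is_eqpart [set side_set i; ~: side_set i].
Proof.
by move=> i10; apply/existsP; exists (side_set i); rewrite eqxx card_side ?card_V.
Qed.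

Definition part (i : nat) : eqpart V :=
  insubd (Sub [set side_set 0; ~: side_set 0] (@side_eqpart 0 isT) : eqpart V)
    [set side_set i; ~: side_set i].

Lemma val_part i : i < 10 -> val (part i) = [set side_set i; ~: side_set i].
Proof. by move=> i10; rewrite insubdK //; apply: side_eqpart. Qed.

Lemma vtx0_side i : i < 10 -> vtx 0 \in side_set i.
Proof. by move=> i10; rewrite mem_side // (all_iota triples_contain0 i10). Qed.

Lemma part_inj i j : i < 10 -> j < 10 -> part i = part j -> i = j.
Proof.
move=> i10 j10 eq_ij.
have : side_set i \in val (part j) by rewrite -eq_ij val_part // set21.
rewrite val_part // in_set2 => /orP [/eqP eq_side|/eqP eq_side]; last first.
  by have := vtx0_side i10; rewrite eq_side in_setC vtx0_side.
apply/eqP; move: (all_iota (all_iota triples_inj i10) j10) => /implyP; apply.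
apply/allP => y; rewrite mem_iota => /= y6.
by rewrite -!mem_side // eq_side.
Qed.

Lemma side_complete (H : {set V}) : #|H| = 3 -> vtx 0 \in H ->
  exists2 i, i < 10 & side_set i = H.
Proof.
move=> cH H0; pose s := [seq vtx y \in H | y <- iota 0 6].
have s3 : count id s = 3.
  rewrite count_map -card_idx -cH; apply: eq_card => z.
  by rewrite !inE vtx_idx.
have s0 : head false s by rewrite /= H0.
move: (allP triples_complete s (mem_bool_lists s)) => /implyP.
rewrite s3 eqxx s0 => /(_ isT) /hasP [i]; rewrite mem_iota => /andP [_ i10] /eqP s_i.
exists i => //.
apply/setP => z; rewrite inE -[in RHS](vtx_idx z).
have := congr1 (nth false ^~ (idx z)) s_i.
by rewrite !(nth_map 0) ?size_iota ?idx_lt // nth_iota ?idx_lt.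
Qed.

Lemma part_surj (c : eqpart V) : exists2 i, i < 10 & c = part i.
Proof.
case: c => C eqC; have /existsP [H /andP [/eqP CE cardH]] := eqC.
have cH : #|H| = 3 by move: cardH; rewrite card_V; lia.
have cHC : #|~: H| = 3 by rewrite cardsCs setCK card_V cH.
have [H0|H0] := boolP (vtx 0 \in H).
  have [i i10 side_i] := side_complete cH H0; exists i => //.
  by apply: val_inj; rewrite /= val_part // side_i CE.
have [|i i10 side_i] := side_complete cHC; first by rewrite in_setC.
exists i => //; apply: val_inj.
by rewrite /= val_part // side_i setCK CE setUC.
Qed.

Lemma sum_parts (F : eqpart V -> nat) :
  \sum_c F c = \sum_(i <- iota 0 10) F (part i).
Proof.
rewrite -(big_map part predT); apply: perm_big; apply: uniq_perm.
- exact: index_enum_uniq.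
- rewrite map_inj_in_uniq ?iota_uniq // => i j.
  by rewrite !mem_iota /=; apply: part_inj.
- move=> c; rewrite mem_index_enum; have [i i10 ->] := part_surj c.
  by rewrite map_f // mem_iota.
Qed.

Definition edge_set (ab : nat * nat) : {set V} := [set vtx ab.1; vtx ab.2].

Lemma edge_set2 ab : ab \in edges6 -> #|edge_set ab| == 2.
Proof.
case/edge_vertices => lt_ab a6 b6.
rewrite cards2 eq_vtx // idx_vtx //; by case: ltngtP lt_ab.
Qed.

Definition edge_of (ab : nat * nat) : edge V :=
  insubd (Sub (edge_set (0, 1)) (@edge_set2 (0, 1) isT) : edge V) (edge_set ab).

Lemma val_edge_of ab : ab \in edges6 -> val (edge_of ab) = edge_set ab.
Proof. by move=> ab6; rewrite insubdK //; apply: edge_set2. Qed.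

Lemma mem_edge_of ab z : ab \in edges6 -> (z \in val (edge_of ab)) = touches (idx z) ab.
Proof.
move=> ab6; have [_ a6 b6] := edge_vertices ab6.
by rewrite val_edge_of // !inE !eq_vtx // /touches ![_ == idx z]eq_sym.
Qed.

Lemma edge_of_inj : {in edges6 &, injective edge_of}.
Proof.
move=> ab ab' ab6 ab'6 eq_ab; apply/eqP.
move: (allP (allP edges_inj ab ab6) ab' ab'6) => /implyP; apply.
apply/allP => y; rewrite mem_iota => /= y6.
by rewrite -(idx_vtx y6) -!mem_edge_of // eq_ab.
Qed.

Lemma edge_of_surj (e : edge V) : exists2 ab, ab \in edges6 & e = edge_of ab.
Proof.
have /cards2P [x [y [xy eE]]] := valP e.
have idx_xy : idx x != idx y by apply: contra xy => /eqP/val_inj/(can_inj hK) ->.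
have in_edges a b : a < b -> b < 6 -> (a, b) \in edges6.
  move=> lt_ab b6; have a6 := ltn_trans lt_ab b6.
  by move: (all_iota (all_iota edges_complete a6) b6) => /implyP; apply.
have edge_eq a b : a < b -> b < 6 -> [set vtx a; vtx b] = [set x; y] ->
    exists2 ab, ab \in edges6 & e = edge_of ab.
  move=> lt_ab b6 eq_ab; exists (a, b); first exact: in_edges.
  by apply: val_inj; rewrite eE val_edge_of ?in_edges // -eq_ab.
have [lt_xy|lt_yx|eq_xy] := ltngtP (idx x) (idx y).
- by apply: (edge_eq _ _ lt_xy (idx_lt y)); rewrite !vtx_idx.
- by apply: (edge_eq _ _ lt_yx (idx_lt x)); rewrite !vtx_idx setUC.
- by rewrite eq_xy eqxx in idx_xy.
Qed.

Lemma sum_edges (F : edge V -> nat) : \sum_e F e = \sum_(ab <- edges6) F (edge_of ab).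
Proof.
rewrite -(big_map edge_of predT); apply: perm_big; apply: uniq_perm.
- exact: index_enum_uniq.
- by rewrite map_inj_in_uniq ?edges_uniq //; apply: edge_of_inj.
- move=> e; rewrite mem_index_enum; have [ab ab6 ->] := edge_of_surj e.
  by rewrite map_f.
Qed.

Lemma card_edges (A : pred (edge V)) :
  #|[set e | A e]| = count (fun ab => A (edge_of ab)) edges6.
Proof.
by rewrite -sum1dep_card big_mkcond sum_edges -big_mkcond sum1_count.
Qed.

Lemma bip_edge_part i ab : i < 10 -> ab \in edges6 ->
  bip_edge (part i) (edge_of ab) = crosses i ab.
Proof.
move=> i10 ab6; have [_ a6 b6] := edge_vertices ab6.
rewrite (bip_edgeE _ (val_part i10)) val_edge_of //.
rewrite !subUset !sub1set !in_setC !mem_side // /crosses.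
by case: (side i ab.1); case: (side i ab.2).
Qed.

Definition matching_set (m : nat) : {set edge V} := [set:: map edge_of (matching m)].

Lemma mem_matching_set m ab : m < 15 -> ab \in edges6 ->
  (edge_of ab \in matching_set m) = (ab \in matching m).
Proof.
move=> m15 ab6; rewrite inE; apply/mapP/idP => [[ab' ab'm eq_ab]|abm]; last by exists ab.
have ab'6 : ab' \in edges6 := allP (all_iota matchings_edges m15) ab' ab'm.
by rewrite (edge_of_inj ab6 ab'6 eq_ab).
Qed.

Lemma matching_set_pm i m : i < 10 -> m < 15 -> compatible i m ->
  is_pm (part i) (matching_set m).
Proof.
move=> i10 m15 im; apply/andP; split.
  apply/forall_inP => e; have [ab ab6 ->] := edge_of_surj e.
  by rewrite mem_matching_set // bip_edge_part //; apply: (allP im).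
apply/forallP => z; rewrite card_edges.
rewrite (eq_in_count (a2 := fun ab => (ab \in matching m) && touches (idx z) ab)).
  exact: all_iota (all_iota matchings_perfect m15) (idx_lt z).
by move=> ab ab6; rewrite /= mem_matching_set // mem_edge_of.
Qed.

Definition coeffs (v : vec V) : seq nat := [seq v (inr (part i)) | i <- iota 0 10].

Lemma nth_coeffs v i : i < 10 -> nth 0 (coeffs v) i = v (inr (part i)).
Proof. by move=> i10; rewrite (nth_map 0) ?size_iota // nth_iota. Qed.

Section Coefficients.
Variables (v : vec V) (k : nat) (lam : eqpart V * {set edge V} -> nat).
Hypotheses (k_gt0 : 0 < k) (lam_pm : forall p, ~~ is_pm p.1 p.2 -> lam p = 0)
  (k_v : forall i, k * v i = \sum_p lam p * chi_qc p.1 p.2 i)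
  (v_edge : forall e, v (inl e) = 1).

(* Every vertex of K_6 has degree 5. *)
Lemma lam_total6 : \sum_p lam p = 5 * k.
Proof.
rewrite -(lam_total lam_pm k_v v_edge (vtx 0)) card_edges -degree0.
by congr (_ * _); apply: eq_in_count => ab ab6; rewrite /= mem_edge_of // idx_vtx.
Qed.

(* Six edges lie inside the sides of a partition, and the other matchings,
   of total weight 5k - k v_c, cover each at most twice. *)
Lemma coeff_le2 i : i < 10 -> v (inr (part i)) <= 2.
Proof.
move=> i10; have noncross : #|[set e | ~~ bip_edge (part i) e]| = 6.
  rewrite card_edges -(eqP (all_iota noncrossing6 i10)).
  by apply: eq_in_count => ab ab6; rewrite /= bip_edge_part.
have := noncrossing_bound lam_pm k_v v_edge (val_part i10) (card_side i10)
  (card_side_compl i10).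
have := part_complement k_v (part i); rewrite noncross lam_total6.
by move: (v _) (\sum_p _) => c W; nia.
Qed.

Lemma coeffs_sum : sumn (coeffs v) = 5.
Proof.
have : k * sumn (coeffs v) = k * 5.
  rewrite sumnE big_map big_distrr /= -(sum_parts (fun c => k * v (inr c))).
  by rewrite (parts_total k_v) lam_total6 mulnC.
by move/eqP; rewrite eqn_pmul2l // => /eqP.
Qed.

Lemma coeffs_covering : covering (coeffs v).
Proof.
apply/allP => ab ab6.
have [c v_c bip] := covered k_gt0 lam_pm k_v v_edge (edge_of ab).
have [i i10 ci] := part_surj c; apply/hasP; exists i; first by rewrite mem_iota.
by rewrite nth_coeffs // -bip_edge_part // -ci v_c bip.
Qed.

Lemma coeffs_admissible : admissible (coeffs v).
Proof.
apply/and4P; split; first by rewrite size_map size_iota.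
- by apply/allP => x /mapP [i]; rewrite mem_iota => /andP [_ i10] ->; apply: coeff_le2.
- by rewrite coeffs_sum.
- exact: coeffs_covering.
Qed.

End Coefficients.

(* Sufficient condition: a certificate for the coefficients of v yields the
   integral decomposition of v into the five matchings of the factorization,
   each paired with its assigned partition. *)
Lemma certificate_decomposition (v : vec V) w :
  (forall e, v (inl e) = 1) -> certificate_ok (coeffs v) w -> in_N_PM v.
Proof.
case: w => f a v_edge /and5P [f6 /eqP size_a a10 count_a].
have /and3P [/eqP size_f f15 partition_f] := all_iota factorizations_ok f6.
have size_af : size a = size (factorization f) by rewrite size_a size_f.
rewrite all2E size_af eqxx /= => /allP compat.
have zip_a x : x \in zip a (factorization f) ->
    [/\ x.1 < 10, x.2 < 15 & compatible x.1 x.2].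
  move=> x_zip; split; last exact: compat.
  - by apply: (allP a10); rewrite -(unzip1_zip (eq_leq size_af)) map_f.
  - by apply: (allP f15); rewrite -(unzip2_zip (eq_leq (esym size_af))) map_f.
pose ds := [seq (part x.1, matching_set x.2) | x <- zip a (factorization f)].
exists (fun p => count_mem p ds); split.
  move=> p; apply: contraNeq; rewrite -lt0n -has_count has_pred1.
  by case/mapP => x /zip_a [i10 m15 im] ->; apply: matching_set_pm.
case=> [e|c]; rewrite sum_count_mem big_map /=.
  have [ab ab6 ->] := edge_of_surj e.
  rewrite (eq_big_seq (fun x => (ab \in matching x.2) : nat)); last first.
    by move=> x /zip_a [_ m15 _]; rewrite mem_matching_set.
  rewrite sum_nat_of_bool (count_zip2 (fun m => ab \in matching m)) // v_edge.
  exact/esym/eqP/(allP partition_f).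
have [i i10 ->] := part_surj c.
rewrite (eq_big_seq (fun x => (x.1 == i) : nat)); last first.
  move=> x /zip_a [j10 _ _]; rewrite eq_sym.
  by congr nat_of_bool; apply/eqP/eqP => [/part_inj ->|->].
rewrite sum_nat_of_bool (count_zip1 (pred1 i)) // -nth_coeffs //.
exact/esym/eqP/(all_iota count_a i10).
Qed.

Lemma K6_B_factorizable : B_factorizable [set: edge V].
Proof.
move=> v v_edges [k [k_gt0 [lam [lam_pm k_v]]]].
have v_edge e : v (inl e) = 1 by rewrite v_edges inE.
have [w ok] := admissible_certified (coeffs_admissible k_gt0 lam_pm k_v v_edge).
exact: certificate_decomposition v_edge ok.
Qed.

End Transport.

Theorem mainTheorem8 (V : finType) (hV : #|V| = 6) :
  B_factorizable [set: edge V].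
Proof.
pose g (i : 'I_6) : V := enum_val (cast_ord (esym hV) i).
pose h (z : V) : 'I_6 := cast_ord hV (enum_rank z).
apply: (@K6_B_factorizable V g h).
- by move=> i; rewrite /g /h enum_valK cast_ordKV.
- by move=> z; rewrite /h /g cast_ordK enum_rankK.
Qed.
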